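(* Let $X$ be a quasigeodesic metric space with bounded geometry (for example a connected graph with uniformly bounded vertex degrees, with its path metric). (i) If $\lim_{l\to\infty}\frac1l\log\big(\sup_{y\in X}|B(y,l)|\big)=0$, then $h_\infty(X)=0$. (ii) If $\limsup_{l\to\infty}\frac1l\log\big(\sup_{y\in X}|B(y,l)|\big)>0$, then $h_\infty(X)=\infty$.
   Context: $B(y,l)$ is the closed ball. $X$ is quasigeodesic if there are $C\ge1,A\ge0$ such that any $x,x'$ are joined by a map $p\colon[0,d(x,x')]\to X$, $p(0)=x$, $p(d(x,x'))=x'$, with $C^{-1}|s-t|-A\le d(p(s),p(t))\le C|s-t|+A$. Bounded geometry: for every $r>0$ closed balls of radius $r$ have uniformly bounded cardinality. Coarse entropy $h_\infty(X)=\lim_{\delta\to\infty}\lim_{R\to\infty}\limsup_{n\to\infty}\frac1n\log s(n,R,\delta,x_0)$, where $s(n,R,\delta,x_0)$ is the supremum of cardinalities of $R$-separated sets of $\delta$-paths $(x_0,\dots,x_n)$ ($d(x_i,x_{i+1})\le\delta$) starting at $x_0$, paths compared by $\max_i d(x_i,y_i)$. *)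

From HB Require Import structures.
From mathcomp Require Import all_boot all_order all_algebra.
From mathcomp Require Import all_classical all_reals all_analysis.
Set Implicit Arguments. Unset Strict Implicit. Unset Printing Implicit Defensive.
Import Order.TTheory GRing.Theory Num.Theory.
Import numFieldNormedType.Exports.
Local Open Scope classical_set_scope.
Local Open Scope ring_scope.

Section Defs.
Variables (R : realType) (X : Type) (d : X -> X -> R).

Definition is_metric : Prop :=
  (forall x y, 0 <= d x y) /\ (forall x y, d x y = 0 <-> x = y) /\
  (forall x y, d x y = d y x) /\ (forall x y z, d x z <= d x y + d y z).

Definition cball (y : X) (l : R) : set X := [set z | d y z <= l].

Definition ecard (A : set X) : \bar R :=
  ereal_sup [set (k%:R)%:E | k in
     [set k : nat | exists f : 'I_k -> X, injective f /\ (forall i, A (f i))]].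

Definition max_ball_card (l : R) : \bar R :=
  ereal_sup [set ecard (cball y l) | y in [set: X]].

Definition bounded_geometry : Prop :=
  forall r : R, exists N : nat, forall y, (ecard (cball y r) <= (N%:R)%:E)%E.

Definition quasigeodesic : Prop :=
  exists (C A : R), 1 <= C /\ 0 <= A /\
    forall x x' : X, exists p : R -> X,
      p 0 = x /\ p (d x x') = x' /\
      forall s t, 0 <= s <= d x x' -> 0 <= t <= d x x' ->
        C^-1 * `|s - t| - A <= d (p s) (p t) <= C * `|s - t| + A.

Definition delta_path (n : nat) (delta : R) (x0 : X) (p : 'I_n.+1 -> X) : Prop :=
  p ord0 = x0 /\ forall i : 'I_n.+1, forall (Hi : (i.+1 < n.+1)%N),
      d (p i) (p (Ordinal Hi)) <= delta.

Definition path_dist (n : nat) (p q : 'I_n.+1 -> X) : R :=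
  \big[Num.max/0]_(i < n.+1) d (p i) (q i).

(* s(n,R,delta,x0): sup of cardinalities of Rs-separated sets of delta-paths
   of length n starting at x0 (a set of k paths is given as k pairwise
   distinct, pairwise Rs-separated paths) *)
Definition sep_count (n : nat) (Rs delta : R) (x0 : X) : \bar R :=
  ereal_sup [set (k%:R)%:E | k in
    [set k : nat | exists P : 'I_k -> ('I_n.+1 -> X),
       (forall i, delta_path delta x0 (P i)) /\
       (forall i j, i != j -> P i <> P j /\ Rs <= path_dist (P i) (P j))]].

Definition elog_over (n : nat) (s : \bar R) : \bar R :=
  match s with
  | EFin r => (ln r / n%:R)%:E
  | +oo%E => +oo%E
  | -oo%E => -oo%E
  end.

Definition coarse_entropy (x0 : X) : \bar R :=
  lim ((fun delta : R =>
     lim ((fun Rs : R =>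
        limn_esup (fun n => elog_over n (sep_count n Rs delta x0)))
        Rs @[Rs --> +oo]))
     delta @[delta --> +oo]).

Definition ball_growth (l : R) : \bar R :=
  match max_ball_card l with
  | EFin r => (ln r / l)%:E
  | +oo%E => +oo%E
  | -oo%E => -oo%E
  end.

End Defs.

(* Let h(delta, Rs) be the exponential growth rate in n of the number of
   Rs-separated delta-paths of length n from x0, so that the coarse entropy is
   lim_{delta -> oo} lim_{Rs -> oo} h(delta, Rs).

   (i)  Upper bound (no quasigeodesic hypothesis).  Sample a delta-path every m
        steps, where m = floor (Rs / (4 delta)).  Consecutive samples lie in a
        ball of radius m delta, so with at most K points in such balls there
        are at most K^(n/m) sample sequences; two paths with the same samples
        are at distance <= 2 m delta < Rs.  Hence h(delta, Rs) is at most
        ln K / m = delta * (ball growth at scale m delta), and the latter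
        tends to 0 as Rs -> oo when the ball growth tends to 0.
   (ii) Lower bound.  If the ball growth exceeds c > 0 at arbitrarily large
        scales l, a ball B(y, l) contains an Rs-separated set S with
        ln |S| >= c l / 2.  Discretizing the quasigeodesics with step
        s = (delta - A) / C gives delta-paths that reach y and then hop from
        point to point of S, m ~ 2 l / s steps per hop; the |S|^(n/m) hop
        sequences give Rs-separated paths, so h(delta, Rs) >= c s / 12 for
        all Rs, which tends to +oo with delta. *)

From HB Require Import structures.
From mathcomp Require Import all_boot all_order all_algebra.
From mathcomp Require Import all_classical all_reals all_analysis.
From mathcomp Require Import ring lra zify.
Import Order.TTheory GRing.Theory Num.Theory.
Import numFieldNormedType.Exports.
Local Open Scope classical_set_scope.
Local Open Scope ring_scope.
Set Implicit Arguments. Unset Strict Implicit. Unset Printing Implicit Defensive.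
Local Notation truncn := Num.truncn.

Section ExtendedReals.
Variable R : realType.

Lemma limn_esup_ub (u : nat -> \bar R) b : (forall n, u n <= b)%E -> (limn_esup u <= b)%E.
Proof.
move=> ub; rewrite /limn_esup limf_esupE; apply: ge_ereal_inf.
exists (ereal_sup (u @` setT)); first by exists setT => //; exact: filterT.
by apply: ge_ereal_sup => _ [n _ <-].
Qed.

Lemma limn_esup_lb (u : nat -> \bar R) b N : (forall n, (N <= n)%N -> (b <= u n)%E) ->
  (b <= limn_esup u)%E.
Proof.
move=> lb; rewrite /limn_esup limf_esupE; apply: le_ereal_inf_tmp => _ [V [M _ HM] <-].
apply: le_ereal_sup_tmp; exists (u (maxn M N)); last by apply: lb; rewrite leq_maxr.
by exists (maxn M N) => //; apply: HM; rewrite /= leq_maxl.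
Qed.

Lemma limn_esup_mono (u v : nat -> \bar R) :
  (forall n, u n <= v n)%E -> (limn_esup u <= limn_esup v)%E.
Proof.
move=> uv; rewrite /limn_esup !limf_esupE; apply: le_ereal_inf_tmp => _ [V hV <-].
apply: ge_ereal_inf; exists (ereal_sup (u @` V)); first by exists V.
apply: ge_ereal_sup => _ [n Vn <-]; apply: le_trans (uv n) _.
by apply: ereal_sup_ubound; exists n.
Qed.

Lemma elog_over_mono n (a b : \bar R) : (1 <= a)%E -> (a <= b)%E ->
  (elog_over n a <= elog_over n b)%E.
Proof.
case: a => [x| |] //; case: b => [y| |] //; rewrite ?lee_fin => x1 xy.
- rewrite ler_wpM2r ?invr_ge0 ?ler0n // ler_ln // posrE.
  + exact: lt_le_trans x1.
  + exact: lt_le_trans (le_trans x1 xy).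
- by rewrite /elog_over leey.
Qed.

Lemma elog_over_pow_le (s r : R) (J m n : nat) : 1 <= s -> s <= r ^+ J ->
  1 <= r -> (J * m <= n)%N -> (0 < m)%N -> (elog_over n s%:E <= (ln r / m%:R)%:E)%E.
Proof.
move=> s1 sr r1 Jmn m0; rewrite /elog_over lee_fin.
have lr0 : 0 <= ln r := ln_ge0 r1.
case: n Jmn => [|n] Jmn; first by rewrite invr0 mulr0 divr_ge0.
have r0 : 0 < r by exact: lt_le_trans ltr01 r1.
apply: (@le_trans _ _ (ln (r ^+ J) / n.+1%:R)).
  by rewrite ler_wpM2r ?invr_ge0 // ler_ln // posrE ?exprn_gt0 // (lt_le_trans ltr01).
rewrite lnXn // ler_pdivrMr ?ltr0Sn // mulrAC ler_pdivlMr ?ltr0n //.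
have -> : ln r *+ J * m%:R = ln r * (J * m)%:R by rewrite natrM mulrA !mulr_natr.
by rewrite ler_wpM2l // ler_nat.
Qed.

Lemma elog_over_pow_ge (a : R) (j n : nat) (b : \bar R) : 1 <= a ->
  ((a ^+ j)%:E <= b)%E -> ((j%:R * ln a / n%:R)%:E <= elog_over n b)%E.
Proof.
move=> a1; have a0 : 0 < a := lt_le_trans ltr01 a1.
case: b => [r| |] ajr; [|by rewrite leey|by move: ajr; rewrite leeNy_eq].
rewrite lee_fin in ajr; rewrite /elog_over lee_fin ler_wpM2r ?invr_ge0 ?ler0n //.
rewrite mulr_natl -lnXn // ler_ln // posrE ?exprn_gt0 //.
exact: lt_le_trans (exprn_gt0 _ a0) ajr.
Qed.

End ExtendedReals.

Lemma steps_cover (R : realType) (a s : R) : 0 <= a -> 0 < s ->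
  a <= (truncn (a / s)).+1%:R * s.
Proof.
move=> a0 s0; have /andP [_ h] := truncn_itv (divr_ge0 a0 (ltW s0)).
by rewrite -ler_pdivrMr //; exact: ltW.
Qed.

Lemma steps_cover_le (R : realType) (a s : R) : 0 <= a -> 0 < s ->
  (truncn (a / s)).+1%:R * s <= a + s.
Proof.
move=> a0 s0; rewrite -natr1 mulrDl mul1r lerD2r -ler_pdivlMr //.
by rewrite truncn_le divr_ge0 // ltW.
Qed.

(* After n >= 2 (L + m) steps, the first L of which lead to the first hop,
   the (n - L) / m complete hops of m steps cover at least half of the n steps. *)
Lemma hop_count (n L m : nat) : (0 < m)%N -> (2 * (L + m) <= n)%N ->
  [/\ (L <= n)%N, (0 < n)%N & (n <= 2 * ((n - L) %/ m * m))%N].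
Proof.
move=> m0 Hn; have := divn_eq (n - L) m; have := ltn_pmod (n - L) m0.
by move: ((n - L) %/ m)%N ((n - L) %% m)%N => j r rm e; split; lia.
Qed.

Section Coding.
Variable X : Type.

(* A set containing at most K distinct points can be injectively coded
   by 'I_K (enumerate a maximal finite family of its points). *)
Lemma bounded_set_code (A : set X) (K : nat) (a : X) : A a ->
  (forall k (f : 'I_k -> X), injective f -> (forall i, A (f i)) -> (k <= K)%N) ->
  exists c : X -> 'I_K, forall x y, A x -> A y -> c x = c y -> x = y.
Proof.
move=> Aa HK.
have K0 : (0 < K)%N.
  by apply: (HK 1 (fun _ => a)) => // [[[|//] ?] [[|//] ?]] _; exact: val_inj.
pose P n := `[< exists f : 'I_n -> X, injective f /\ forall i, A (f i) >].
have P0 : exists n, P n by exists 0%N; apply/asboolP; exists (fun=> a); split => [[]|[]].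
have Pub n : P n -> (n <= K)%N by move=> /asboolP [f [fi fA]]; exact: HK fi fA.
case: (ex_maxnP P0 Pub) => n /asboolP [f [fi fA]] nmax.
have nK : (n <= K)%N by apply: Pub; apply/asboolP; exists f.
have cover x : A x -> exists i, f i = x.
  move=> Ax; apply: contrapT => nex.
  pose g i := if unlift ord_max i is Some j then f j else x.
  suff : (n.+1 <= n)%N by rewrite ltnn.
  apply: nmax; apply/asboolP; exists g; split; last first.
    by move=> i; rewrite /g; case: (unliftP ord_max i).
  move=> i i'; rewrite /g.
  case: (unliftP ord_max i) => [j ->|->]; case: (unliftP ord_max i') => [j' ->|->] //.
  - by move=> /fi ->.
  - by move=> fj; exfalso; apply: nex; exists j.
  - by move=> fj; exfalso; apply: nex; exists j'.
pose c x := if pselect (exists i, f i = x) is left e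
  then widen_ord nK (projT1 (cid e)) else Ordinal K0.
exists c => x y Ax Ay; rewrite /c.
case: pselect => [ex|/(_ (cover x Ax))] //; case: pselect => [ey|/(_ (cover y Ay))] //.
case: (cid ex) => i fx; case: (cid ey) => j fy /= /(congr1 val) /= ij.
by rewrite -fx -fy; congr f; exact: val_inj.
Qed.

End Coding.

Section CoarseEntropy.
Variables (R : realType) (X : Type) (d : X -> X -> R).
Hypothesis dm : is_metric d.

Lemma d_ge0 x y : 0 <= d x y. Proof. by case: dm. Qed.
Lemma d_xx x : d x x = 0. Proof. by case: dm => _ [H _]; apply/H. Qed.
Lemma d_sym x y : d x y = d y x. Proof. by case: dm => _ [_ [H _]]. Qed.
Lemma d_tri x y z : d x z <= d x y + d y z. Proof. by case: dm => _ [_ [_ H]]. Qed.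

Lemma cball_center y l : 0 <= l -> cball d y l y.
Proof. by rewrite /cball /= d_xx. Qed.

Definition ball_capacity (rho : R) (K : nat) : Prop :=
  forall y k (f : 'I_k -> X), injective f -> (forall i, cball d y rho (f i)) -> (k <= K)%N.

Lemma ecard_le (A : set X) (b : R) (I : finType) (S : {set I}) (f : I -> X) :
  (ecard R A <= b%:E)%E -> {in S &, injective f} -> (forall i, i \in S -> A (f i)) ->
  #|S|%:R <= b.
Proof.
move=> Ab finj fA; rewrite -lee_fin; apply: le_trans Ab.
apply: ereal_sup_ubound; exists #|S| => //.
exists (fun i => f (enum_val i)); split; last by move=> i; apply: fA; exact: enum_valP.
by move=> i j /finj h; apply: enum_val_inj; apply: h; exact: enum_valP.
Qed.

Lemma ecard_gt (A : set X) (a : R) : (a%:E < ecard R A)%E ->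
  exists k (f : 'I_k -> X), [/\ injective f, (forall i, A (f i)) & a < k%:R].
Proof. by move=> /ereal_sup_gt [_ [k [f [fi fA]] <-]]; rewrite lte_fin; exists k, f. Qed.

Lemma max_ball_card_fin (x0 : X) l : bounded_geometry d -> 0 <= l -> exists r,
  [/\ max_ball_card d l = r%:E, 1 <= r & forall y, (ecard R (cball d y l) <= r%:E)%E].
Proof.
move=> bg l0; case: (bg l) => N HN.
have ub : (max_ball_card d l <= (N%:R)%:E)%E by apply: ge_ereal_sup => _ [y _ <-].
have lb : (1 <= ecard R (cball d x0 l))%E.
  apply: ereal_sup_ubound; exists 1%N => //; exists (fun _ => x0); split.
    by move=> [[|//] ?] [[|//] ?] _; exact: val_inj.
  by move=> _; exact: cball_center.
have lb2 : (ecard R (cball d x0 l) <= max_ball_card d l)%E.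
  by apply: ereal_sup_ubound; exists x0.
have := le_trans lb lb2; move: ub.
case E : (max_ball_card d l) => [r| |] // _ r1.
by exists r; split => // y; rewrite -E; apply: ereal_sup_ubound; exists y.
Qed.

Lemma ball_capacity_trunc (l r : R) : 0 <= r ->
  (forall y, (ecard R (cball d y l) <= r%:E)%E) -> ball_capacity l (truncn r).
Proof.
move=> r0 Hr y k f fi fA; rewrite truncn_ge_nat //.
have := ecard_le (S := [set: 'I_k]) (Hr y) (fun i j _ _ => @fi i j) (fun i _ => fA i).
by rewrite cardsT card_ord.
Qed.

Definition entropy_at (delta Rs : R) (x0 : X) : \bar R :=
  limn_esup (fun n => elog_over n (sep_count d n Rs delta x0)).

Lemma coarse_entropyE x0 : coarse_entropy d x0 =
  lim ((fun delta => lim (entropy_at delta Rs x0 @[Rs --> +oo])) delta @[delta --> +oo]).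
Proof. by []. Qed.

Lemma sep_count_ub n Rs delta x0 (b : R) :
  (forall k (P : 'I_k -> 'I_n.+1 -> X), (forall i, delta_path d delta x0 (P i)) ->
    (forall i j, i != j -> P i <> P j /\ Rs <= path_dist d (P i) (P j)) -> k%:R <= b) ->
  (sep_count d n Rs delta x0 <= b%:E)%E.
Proof.
move=> H; apply: ge_ereal_sup => _ [k [P [P1 P2]] <-].
by rewrite lee_fin; exact: H P1 P2.
Qed.

Lemma sep_count_lb n Rs delta x0 (I : finType) (P : I -> 'I_n.+1 -> X) :
  (forall i, delta_path d delta x0 (P i)) ->
  (forall i j, i != j -> P i <> P j /\ Rs <= path_dist d (P i) (P j)) ->
  ((#|I|%:R)%:E <= sep_count d n Rs delta x0)%E.
Proof.
move=> P1 P2; apply: ereal_sup_ubound; exists #|I| => //.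
exists (fun i => P (enum_val i)); split => [i|i j ij]; first exact: P1.
by apply: P2; apply: contra ij => /eqP /enum_val_inj ->.
Qed.

(* The constant path is a delta-path, so s(n, Rs, delta, x0) >= 1. *)
Lemma sep_count_ge1 n Rs delta x0 : 0 <= delta -> (1 <= sep_count d n Rs delta x0)%E.
Proof.
move=> d0; have := @sep_count_lb n Rs delta x0 unit (fun _ _ => x0).
by rewrite card_unit; apply => [i|[] [] //]; split => // j Hj; rewrite d_xx.
Qed.

Lemma sep_count_fin n Rs delta x0 (b : R) : 0 <= delta ->
  (sep_count d n Rs delta x0 <= b%:E)%E ->
  exists s, sep_count d n Rs delta x0 = s%:E /\ 1 <= s <= b.
Proof.
move=> d0; have := sep_count_ge1 n Rs x0 d0.
by case: sep_count => [s| |] // s1 sb; exists s; rewrite -!lee_fin s1 sb.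
Qed.

Lemma sep_count_mono n Rs1 Rs2 delta x0 : Rs1 <= Rs2 ->
  (sep_count d n Rs2 delta x0 <= sep_count d n Rs1 delta x0)%E.
Proof.
move=> r12; apply: ereal_sup_le => _ [k [P [P1 P2]] <-]; exists k => //.
by exists P; split => // i j /P2 [H1 H2]; split => //; exact: le_trans H2.
Qed.

Lemma entropy_at_mono x0 delta : 0 <= delta ->
  {homo (fun Rs => entropy_at delta Rs x0) : a b / a <= b >-> (b <= a)%E}.
Proof.
move=> d0 a b ab; apply: limn_esup_mono => n.
by apply: elog_over_mono; [exact: sep_count_ge1 | exact: sep_count_mono].
Qed.

Lemma path_dist_le n (p q : 'I_n.+1 -> X) b : 0 <= b ->
  (forall i, d (p i) (q i) <= b) -> path_dist d p q <= b.
Proof. by move=> b0 H; apply: bigmax_le => // i _; exact: H. Qed.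

Lemma path_dist_ge n (p q : 'I_n.+1 -> X) i : d (p i) (q i) <= path_dist d p q.
Proof. exact: le_bigmax. Qed.

Lemma path_dist_xx n (p : 'I_n.+1 -> X) : path_dist d p p = 0.
Proof.
apply/le_anti; rewrite path_dist_le //=; last by move=> i; rewrite d_xx.
by apply: le_trans (path_dist_ge p p ord0); rewrite d_xx.
Qed.

Lemma path_step n delta x0 (p : 'I_n.+1 -> X) : delta_path d delta x0 p ->
  forall a b, (a <= b)%N -> (b <= n)%N ->
  d (p (inord a)) (p (inord b)) <= (b - a)%:R * delta.
Proof.
move=> [_ Hst] a; elim => [|b IH] ab bn.
  by move: ab; rewrite leqn0 => /eqP ->; rewrite d_xx mul0r.
move: ab; rewrite leq_eqVlt => /orP [/eqP ->|ab]; first by rewrite subnn mul0r d_xx.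
have Hi : ((inord b : 'I_n.+1).+1 < n.+1)%N by rewrite inordK // (leq_trans bn).
have e : Ordinal Hi = inord b.+1 by apply: val_inj; rewrite /= !inordK // (leq_trans bn).
apply: le_trans (d_tri _ (p (inord b)) _) _.
rewrite subSn // mulrSr mulrDl mul1r lerD //; first by apply: IH => //; exact: ltnW.
by rewrite -e; exact: Hst.
Qed.

(* Sequences of J steps of length <= rho from x0 number at most K^J when every
   rho-ball holds at most K points: each step is coded by a point of 'I_K. *)
Lemma skeleton_count (rho : R) (K : nat) (x0 : X) : 0 <= rho -> ball_capacity rho K ->
  forall J (I : finType) (F : I -> nat -> X), (forall i, F i 0%N = x0) ->
  (forall i j, (j < J)%N -> d (F i j) (F i j.+1) <= rho) ->
  (forall i i', (forall j, (j <= J)%N -> F i j = F i' j) -> i = i') ->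
  (#|I| <= K ^ J)%N.
Proof.
move=> rho0 HK J I F F0 Fst Finj.
have /choice [code Hcode] y : exists c : X -> 'I_K,
    forall x z, cball d y rho x -> cball d y rho z -> c x = c z -> x = z.
  exact: (bounded_set_code (cball_center y rho0)) (HK y).
pose phi i := [ffun j : 'I_J => code (F i j) (F i j.+1)].
rewrite -(card_ord K) -(card_ord J) -card_ffun; apply: (@leq_card _ _ phi) => i i' eqphi.
apply: Finj; elim => [|j IH] jJ; first by rewrite !F0.
have := congr1 (fun g : {ffun 'I_J -> 'I_K} => g (Ordinal jJ)) eqphi.
have eqj : F i j = F i' j by apply: IH; exact: ltnW.
rewrite !ffunE /= eqj; apply: Hcode; last exact: Fst.
by rewrite /cball /= -eqj; exact: Fst.
Qed.

(* Rs-separated delta-paths of length n are at most K^(n/m) when 2 m delta < Rs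
   and (m delta)-balls hold at most K points: sample them every m steps. *)
Lemma sep_count_le_pow n Rs delta x0 (m K : nat) : 0 <= delta -> (0 < m)%N ->
  2 * (m%:R * delta) < Rs -> ball_capacity (m%:R * delta) K ->
  (sep_count d n Rs delta x0 <= ((K ^ (n %/ m))%:R)%:E)%E.
Proof.
move=> d0 m0 mR HK; apply: sep_count_ub => k P P1 P2.
rewrite ler_nat -[k]card_ord.
apply: (@skeleton_count _ K x0 (mulr_ge0 (ler0n _ _) d0) HK _ _
  (fun i j => P i (inord (j * m)))).
- move=> i /=; have -> : (inord (0 * m) : 'I_n.+1) = ord0 by apply: val_inj; rewrite /= inordK.
  by case: (P1 i).
- move=> i j jJ /=; have := path_step (P1 i) (leq_addl m (j * m)).
  rewrite -mulSn mulSn addnK; apply; rewrite -mulSn.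
  by apply: leq_trans (leq_divM n m); rewrite leq_mul2r jJ orbT.
move=> i i' Heq; apply/eqP; apply: contraT => ii'.
have [_ H] := P2 _ _ ii'; suff : path_dist d (P i) (P i') < Rs by rewrite ltNge H.
apply: le_lt_trans mR; apply: path_dist_le; first by rewrite !mulr_ge0.
move=> t; set a := (t %/ m * m)%N.
have at_ : (a <= t)%N by exact: leq_divM.
have tn : (t <= n)%N by rewrite -ltnS.
have ta : (t - a <= m)%N by rewrite ltnW // /a {1}(divn_eq t m) addKn ltn_pmod.
have E := Heq _ (leq_div2r m tn); rewrite /= -/a in E.
have B1 := path_step (P1 i) at_ tn; have B2 := path_step (P1 i') at_ tn.
rewrite inord_val in B1 B2.
apply: le_trans (d_tri _ (P i (inord a)) _) _.
rewrite d_sym {2}E mulr2n mulrDl mul1r; apply: lerD.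
  by apply: le_trans B1 _; apply: ler_wpM2r; rewrite // ler_nat.
by apply: le_trans B2 _; apply: ler_wpM2r; rewrite // ler_nat.
Qed.

Lemma sampling_scale (delta Rs : R) : 0 < delta -> 8 * delta <= Rs ->
  (0 < truncn (Rs / (4 * delta)))%N /\ 2 * ((truncn (Rs / (4 * delta)))%:R * delta) < Rs.
Proof.
move=> d0 Rs8; have Rs0 : 0 < Rs by apply: lt_le_trans Rs8; rewrite mulr_gt0.
have q0 : 0 <= Rs / (4 * delta) by rewrite divr_ge0 ?mulr_ge0 // ltW.
split.
  rewrite truncn_ge_nat // ler_pdivlMr ?mulr_gt0 //.
  by apply: le_trans Rs8; lra.
have mle : (truncn (Rs / (4 * delta)))%:R * delta <= Rs / 4.
  have := truncn_le (Rs / (4 * delta)); rewrite q0 => H.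
  by rewrite -ler_pdivlMr // (le_trans H) // invfM mulrA mulrAC.
apply: le_lt_trans (ler_wpM2l _ mle) _; lra.
Qed.

Lemma entropy_at_ub x0 delta Rs : bounded_geometry d -> 0 < delta -> 8 * delta <= Rs ->
  (0 <= entropy_at delta Rs x0)%E /\
  (entropy_at delta Rs x0 <= delta%:E * ball_growth d ((truncn (Rs / (4 * delta)))%:R * delta))%E.
Proof.
move=> bg d0 Rs8; have [m0 mR] := sampling_scale d0 Rs8.
set m := truncn (Rs / (4 * delta)) in m0 mR *.
have [r [Er r1 Hr]] := max_ball_card_fin x0 bg (mulr_ge0 (ler0n _ m) (ltW d0)).
have r0 : 0 <= r := le_trans ler01 r1.
have bound n := sep_count_fin (ltW d0)
  (sep_count_le_pow n x0 (ltW d0) m0 mR (ball_capacity_trunc r0 Hr)).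
split.
  apply: (limn_esup_lb (N := 0%N)) => n _; have [s [-> /andP [s1 _]]] := bound n.
  by rewrite /elog_over lee_fin divr_ge0 // ln_ge0.
apply: limn_esup_ub => n; have [s [-> /andP [s1 sb]]] := bound n.
rewrite /ball_growth Er -EFinM.
have -> : delta * (ln r / (m%:R * delta)) = ln r / m%:R.
  by field; rewrite pnatr_eq0 -lt0n m0 gt_eqF.
apply: (elog_over_pow_le (J := (n %/ m)%N)) => //; last exact: leq_divM.
by apply: le_trans sb _; rewrite natrX lerXn2r ?nnegrE ?ler0n // truncn_le.
Qed.

Lemma sampling_scale_cvgy (delta : R) : 0 < delta ->
  (fun Rs : R => (truncn (Rs / (4 * delta)))%:R * delta) @ +oo --> +oo.
Proof.
move=> d0; apply/cvgryPge => A.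
exists (4 * (`|A| + delta)); split; first by rewrite num_real.
move=> Rs /= HRs.
have q0 : 0 <= Rs / (4 * delta).
  by rewrite divr_ge0 ?mulr_ge0 ?ltW // (le_lt_trans _ HRs) // mulr_ge0 // addr_ge0 // ltW.
have /andP [_ Ht] := truncn_itv q0.
have H1 : Rs / (4 * delta) - 1 <= (truncn (Rs / (4 * delta)))%:R.
  by rewrite lerBlDr natr1; exact: ltW.
apply: le_trans (ler_wpM2r (ltW d0) H1).
have -> : (Rs / (4 * delta) - 1) * delta = Rs / 4 - delta by field; rewrite gt_eqF.
have : A <= `|A| by exact: ler_norm.
lra.
Qed.

Lemma entropy_at_cvg0 x0 delta : bounded_geometry d ->
  (ball_growth d l @[l --> +oo] --> 0%E) -> 0 < delta ->
  entropy_at delta Rs x0 @[Rs --> +oo] --> 0%E.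
Proof.
move=> bg bg0 d0.
apply: (@squeeze_cvge _ _ _ _ (fun _ => 0%E) _
   (fun Rs => delta%:E * ball_growth d ((truncn (Rs / (4 * delta)))%:R * delta))%E).
- exists (8 * delta); split; first by rewrite num_real.
  by move=> Rs /ltW H; have [-> ->] := entropy_at_ub x0 bg d0 H.
- exact: cvg_cst.
- rewrite -(mule0 delta%:E); apply: cvgeZl => //.
  exact: cvg_comp (sampling_scale_cvgy d0) bg0.
Qed.

Lemma part_i : bounded_geometry d -> (ball_growth d l @[l --> +oo] --> 0%E) ->
  forall x0 : X, coarse_entropy d x0 = 0%E.
Proof.
move=> bg bg0 x0; rewrite coarse_entropyE; apply: cvg_lim => //.
apply: cvg_near_cst; exists 0; split; first by rewrite num_real.
by move=> delta /= d0; apply: cvg_lim => //; exact: entropy_at_cvg0.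
Qed.

Definition quasi_path_family (Pq : X -> X -> R -> X) (C A : R) : Prop :=
  forall x x', Pq x x' 0 = x /\ Pq x x' (d x x') = x' /\
    forall u v, 0 <= u <= d x x' -> 0 <= v <= d x x' ->
      d (Pq x x' u) (Pq x x' v) <= C * `|u - v| + A.

Lemma quasigeodesic_paths : quasigeodesic d ->
  exists Pq C A, [/\ quasi_path_family Pq C A, 1 <= C & 0 <= A].
Proof.
case=> C [A [C1 [A0 Hq]]].
pose Pq x := projT1 (choice (Hq x)).
have HP x x' := projT2 (choice (Hq x)) x'.
exists Pq, C, A; split => // x x'; have [P0 [P1 P2]] := HP x x'.
by do 2!split => //; move=> u v hu hv; case/andP: (P2 u v hu hv).
Qed.

Section DiscreteQuasiPaths.
Variables (Pq : X -> X -> R -> X) (C A s : R).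
Hypothesis Pq_quasi : quasi_path_family Pq C A.

Definition discrete_qpath (a b : X) (t : nat) : X := Pq a b (Num.min (t%:R * s) (d a b)).

Lemma qpath_0 a b : discrete_qpath a b 0 = a.
Proof. by rewrite /discrete_qpath mul0r min_l ?d_ge0 //; case: (Pq_quasi a b). Qed.

Lemma qpath_end a b t : d a b <= t%:R * s -> discrete_qpath a b t = b.
Proof. by move=> h; rewrite /discrete_qpath min_r //; case: (Pq_quasi a b) => _ []. Qed.

Lemma qpath_step a b t : 0 <= C -> 0 <= s ->
  d (discrete_qpath a b t) (discrete_qpath a b t.+1) <= C * s + A.
Proof.
move=> C0 s0; case: (Pq_quasi a b) => _ [_ H]; rewrite /discrete_qpath.
have D0 := d_ge0 a b; set D := d a b in H D0 *.
have ts0 : 0 <= t%:R * s by rewrite mulr_ge0.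
have e : t.+1%:R * s = t%:R * s + s by rewrite -natr1 mulrDl mul1r.
apply: le_trans (H _ _ _ _) _.
- by rewrite le_min ts0 D0 ge_min lexx orbT.
- by rewrite le_min e D0 ge_min lexx orbT addr_ge0.
rewrite lerD2r ler_wpM2l // /Num.min e; case: ifP => h1; case: ifP => h2.
- by rewrite opprD addrA subrr add0r normrN ger0_norm.
- by rewrite ltr0_norm ?subr_lt0 //; move: h2; rewrite ltNge => /negbFE h2; lra.
- by move: h1 h2; rewrite ltNge => /negbFE h1 h2; lra.
- by rewrite subrr normr0.
Qed.

End DiscreteQuasiPaths.

Definition separated_in k (w : 'I_k -> X) (Rs : R) (S : {set 'I_k}) : Prop :=
  forall i j, i \in S -> j \in S -> i != j -> Rs <= d (w i) (w j).

Section Chains.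
Variables (delta : R) (q : X -> X -> nat -> X) (m : nat) (B : set X).
Hypothesis q0 : forall a b, q a b 0 = a.
Hypothesis q_step : forall a b t, d (q a b t) (q a b t.+1) <= delta.
Hypothesis q_end : forall a b, B a -> B b -> q a b m = b.
Hypothesis m_gt0 : (0 < m)%N.

Definition chain (a : nat -> X) (u : nat) : X := q (a (u %/ m)%N) (a (u %/ m)%N.+1) (u %% m)%N.

Lemma chain_at a i : chain a (i * m) = a i.
Proof. by rewrite /chain mulnK // modnMl q0. Qed.

Lemma chain_step a : (forall i, B (a i)) -> forall u, d (chain a u) (chain a u.+1) <= delta.
Proof.
move=> Ba u; rewrite /chain.
have Hu := divn_eq u m; set i := (u %/ m)%N in Hu *; set r := (u %% m)%N in Hu *.
have -> : u.+1 = (i * m + r.+1)%N by rewrite Hu addnS.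
have : (r < m)%N by rewrite ltn_pmod.
rewrite leq_eqVlt => /orP [/eqP rm|rm].
  rewrite rm -mulSnr mulnK // modnMl q0.
  by rewrite -{2}(q_end (Ba i) (Ba i.+1)) -rm.
by rewrite divnMDl // modnMDl divn_small // modn_small // addn0.
Qed.

Variables (x0 y : X) (L : nat).
Hypothesis By : B y.
Hypothesis qL : q x0 y L = y.

Definition block_path (a : nat -> X) (t : nat) : X :=
  if (t <= L)%N then q x0 y t else chain a (t - L).

Lemma block_path_after a t : a 0%N = y -> (L <= t)%N -> block_path a t = chain a (t - L).
Proof.
move=> a0 Lt; rewrite /block_path; case: leqP => // tL.
have -> : t = L by apply/eqP; rewrite eqn_leq tL Lt.
by rewrite subnn qL; have := chain_at a 0; rewrite mul0n a0 => ->.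
Qed.

Lemma block_path_at a i : a 0%N = y -> block_path a (L + i * m) = a i.
Proof. by move=> a0; rewrite block_path_after ?leq_addr // addKn chain_at. Qed.

Lemma block_path_step a t : a 0%N = y -> (forall i, B (a i)) ->
  d (block_path a t) (block_path a t.+1) <= delta.
Proof.
move=> a0 Ba; case: (leqP t.+1 L) => h; first by rewrite /block_path h (ltnW h).
by rewrite !block_path_after // ?(ltnW h) // subSn //; exact: chain_step.
Qed.

Variables (k : nat) (w : 'I_k -> X) (S : {set 'I_k}) (Rs : R).
Hypothesis Bw : forall i, B (w i).
Hypothesis S_sep : separated_in w Rs S.
Hypothesis Rs_gt0 : 0 < Rs.

Definition hops j (f : 'I_j -> 'I_k) (i : nat) : X :=
  if i is i'.+1 then oapp (w \o f) y (insub i') else y.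

Lemma block_count n : (L <= n)%N ->
  (((#|S| ^ ((n - L) %/ m))%:R)%:E <= sep_count d n Rs delta x0)%E.
Proof.
move=> Ln; set j := ((n - L) %/ m)%N.
pose T := {ffun 'I_j -> {s : 'I_k | s \in S}}.
pose a (f : T) := hops (fun p => val (f p)).
have a0 f : a f 0%N = y by [].
have Ba f i : B (a f i).
  by case: i => [|i] //=; case: (insub i) => [p|] //=; exact: Bw.
have a_hop f (p : 'I_j) : a f p.+1 = w (val (f p)) by rewrite /a /hops /= valK.
pose P (f : T) (t : 'I_n.+1) := block_path (a f) t.
have -> : #|S| = #|{: {s : 'I_k | s \in S}}| by rewrite card_sig.
have -> : (#|{: {s : 'I_k | s \in S}}| ^ j)%N = #|{: T}| by rewrite card_ffun card_ord.
apply: (sep_count_lb (P := P)) => [f|f g fg].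
  split; first by rewrite /P /block_path /= q0.
  by move=> t Ht; exact: (block_path_step _ (a0 f) (Ba f)).
have [p fgp] : exists p, f p != g p.
  apply/existsP; move: fg; apply: contraR; rewrite negb_exists => /forallP H.
  by apply/eqP/ffunP => p; apply/eqP/negPn/H.
have tn : (L + p.+1 * m < n.+1)%N.
  rewrite ltnS -(subnKC Ln) leq_add2l.
  by apply: leq_trans (leq_divM (n - L) m); rewrite leq_mul2r ltn_ord orbT.
have Pt h : P h (Ordinal tn) = w (val (h p)) by rewrite /P /= block_path_at.
have sep : Rs <= path_dist d (P f) (P g).
  apply: le_trans (path_dist_ge _ _ (Ordinal tn)); rewrite !Pt.
  by apply: S_sep; rewrite ?(valP (f p)) ?(valP (g p)) //; apply: contra fgp => /eqP /val_inj ->.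
by split=> // Pfg; move: sep; rewrite Pfg path_dist_xx leNgt Rs_gt0.
Qed.

End Chains.

(* A maximal Rs-separated subfamily is an Rs-net of the family. *)
Lemma separated_net k (w : 'I_k -> X) Rs : 0 < Rs -> exists S : {set 'I_k},
  separated_in w Rs S /\ forall i, exists s, s \in S /\ d (w s) (w i) < Rs.
Proof.
move=> Rs0.
pose sepb (S : {set 'I_k}) :=
  [forall i in S, [forall j in S, (i != j) ==> (Rs <= d (w i) (w j))]].
have sep0 : sepb finset.set0 by apply/forall_inP => i; rewrite finset.in_set0.
have [S sepS Smax] := @arg_maxnP _ finset.set0 sepb (fun S => #|S|) sep0.
have S_sep : separated_in w Rs S.
  by move=> i j iS jS ij; move/forall_inP/(_ i iS)/forall_inP/(_ j jS)/implyP: sepS; apply.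
exists S; split => // i; case: (boolP (i \in S)) => iS; first by exists i; rewrite d_xx.
apply: contrapT => far.
suff /Smax : sepb (i |: S) by rewrite cardsU1 iS /= add1n ltnn.
apply/forall_inP => a; rewrite in_setU1 => /orP [/eqP ->|aS];
  apply/forall_inP => b; rewrite in_setU1 => /orP [/eqP ->|bS]; apply/implyP => ab.
- by rewrite eqxx in ab.
- by rewrite d_sym leNgt; apply/negP => lt; apply: far; exists b.
- by rewrite leNgt; apply/negP => lt; apply: far; exists a.
- exact: S_sep.
Qed.

(* If Rs-balls hold at most N points, an injective family of k points has an
   Rs-separated subfamily of size at least k / N (the balls around a net cover it). *)
Lemma separated_subset_large k (w : 'I_k -> X) Rs (N : nat) : 0 < Rs -> injective w ->
  (forall z, (ecard R (cball d z Rs) <= (N%:R)%:E)%E) ->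
  exists S : {set 'I_k}, separated_in w Rs S /\ (k <= #|S| * N)%N.
Proof.
move=> Rs0 winj HN; have [S [S_sep near]] := separated_net w Rs0.
exists S; split => //; have [phi Hphi] := choice near.
apply: (@leq_trans (\sum_(i : 'I_k) 1)%N); first by rewrite sum1_card card_ord.
rewrite (partition_big phi (mem S)) /=; last by move=> i _; case: (Hphi i).
rewrite -sum_nat_const; apply: leq_sum => s _; rewrite sum1dep_card -(ler_nat R).
apply: (ecard_le (HN (w s))) => [a b _ _|i]; first exact: winj.
by rewrite inE => /eqP <-; rewrite /cball /=; apply: ltW; case: (Hphi i).
Qed.

Lemma growth_exceeds : (0 < limf_esup (ball_growth d) (pinfty_nbhs R))%E ->
  exists c : R, 0 < c /\ forall L0, exists l, L0 < l /\ (c%:E < ball_growth d l)%E.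
Proof.
move=> H.
have [c [c0 cv]] : exists c : R, 0 < c /\ (c%:E < limf_esup (ball_growth d) (pinfty_nbhs R))%E.
  move: H; case: limf_esup => [r| |] //; rewrite ?lte_fin => r0.
    by exists (r / 2); rewrite lte_fin; split; lra.
  by exists 1; split => //; rewrite ltry.
exists c; split => // L0.
have V : pinfty_nbhs R [set l | L0 < l] by exists L0; split; [rewrite num_real|].
have : (c%:E < ereal_sup (ball_growth d @` [set l | (L0 < l)%R]))%E.
  by apply: lt_le_trans cv _; apply: ereal_inf_lbound; exists [set l | L0 < l].
by move=> /ereal_sup_gt [_ [l Hl <-] cl]; exists l.
Qed.

Lemma separated_points_in_ball (x0 : X) (c Rs L0 : R) : bounded_geometry d ->
  0 < c -> 0 < Rs -> 0 <= L0 ->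
  (forall L, exists l, L < l /\ (c%:E < ball_growth d l)%E) ->
  exists l y k (w : 'I_k -> X) (S : {set 'I_k}),
    [/\ L0 < l, (forall i, cball d y l (w i)), separated_in w Rs S, (0 < #|S|)%N
      & c * l / 2 <= ln (#|S|%:R)].
Proof.
move=> bg c0 Rs0 L00 Hc; case: (bg Rs) => N HN.
have [l [Ll cl]] := Hc (L0 + `|2 * ln N%:R / c|).
have l0 : 0 < l by apply: le_lt_trans Ll; rewrite addr_ge0.
have lN : 2 * ln N%:R / c <= l.
  by apply: le_trans (ltW Ll); apply: le_trans (ler_norm _) _; rewrite lerDr.
have [r [Er r1 _]] := max_ball_card_fin x0 bg (ltW l0).
move: cl; rewrite /ball_growth Er lte_fin => cl.
have er : expR (c * l) < r.
  by rewrite -ltr_ln ?posrE ?expR_gt0 ?(lt_le_trans ltr01) // expRK -ltr_pdivlMr.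
have : ((expR (c * l))%:E < max_ball_card d l)%E by rewrite Er lte_fin.
move=> /ereal_sup_gt [_ [y _ <-]] /ecard_gt [k [w [winj wB ek]]].
have [S [S_sep kS]] := separated_subset_large Rs0 winj HN.
have SN : expR (c * l) < #|S|%:R * N%:R by apply: lt_le_trans ek _; rewrite -natrM ler_nat.
have /andP [S0 N0] : (0 < #|S|)%N && (0 < N)%N.
  by rewrite -muln_gt0 -(ltr0n R) natrM (lt_trans (expR_gt0 _) SN).
exists l, y, k, w, S; split => //; first by apply: le_lt_trans Ll; rewrite lerDl.
have h1 : c * l < ln (#|S|%:R) + ln (N%:R).
  by rewrite -lnM ?posrE ?ltr0n // -{1}(expRK (c * l)) ltr_ln ?posrE ?expR_gt0 ?mulr_gt0 ?ltr0n.
have h2 : 2 * ln N%:R <= l * c by rewrite -ler_pdivrMr.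
lra.
Qed.

(* The arithmetic behind h >= c s / 12: ln |S| >= c l / 2, m s <= 3 l and n <= 2 j m. *)
Lemma growth_arith (c s l lnS n j m : R) : 0 < c -> 0 < s -> 0 < n -> 0 <= j ->
  c * l / 2 <= lnS -> m * s <= 3 * l -> n <= 2 * (j * m) -> c * s / 12 <= j * lnS / n.
Proof.
move=> c0 s0 n0 j0 h1 h2 h3; rewrite ler_pdivlMr //.
apply: le_trans (_ : c * s / 12 * (2 * (j * m)) <= _).
  by rewrite ler_wpM2l // divr_ge0 // mulr_ge0 // ltW.
have -> : c * s / 12 * (2 * (j * m)) = (c * j / 6) * (m * s) by field.
apply: le_trans (_ : (c * j / 6) * (3 * l) <= _).
  by rewrite ler_wpM2l // divr_ge0 // mulr_ge0 // ltW.
have -> : c * j / 6 * (3 * l) = j * (c * l / 2) by field.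
by rewrite ler_wpM2l.
Qed.

Lemma entropy_at_lb (x0 : X) (Pq : X -> X -> R -> X) (C A c delta Rs : R) :
  quasi_path_family Pq C A -> 1 <= C -> 0 <= A -> bounded_geometry d -> 0 < c ->
  (forall L, exists l, L < l /\ (c%:E < ball_growth d l)%E) -> A < delta -> 0 < Rs ->
  ((c * ((delta - A) / C) / 12)%:E <= entropy_at delta Rs x0)%E.
Proof.
move=> HP C1 A0 bg c0 Hc dA Rs0; have C0 : 0 < C := lt_le_trans ltr01 C1.
set s := (delta - A) / C; have s0 : 0 < s by rewrite divr_gt0 // subr_gt0.
have [l [y [k [w [S [sl wB S_sep S0 lnS]]]]]] :=
  separated_points_in_ball x0 bg c0 Rs0 (ltW s0) Hc.
have l0 : 0 < l := lt_trans s0 sl.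
set m := (truncn (2 * l / s)).+1; set L := (truncn (d x0 y / s)).+1.
have l2 : 0 <= 2 * l by lra.
have ms : 2 * l <= m%:R * s by exact: steps_cover.
have ms3 : m%:R * s <= 3 * l by have := steps_cover_le l2 s0; rewrite -/m; lra.
pose q := discrete_qpath Pq s.
have Qs a b t : d (q a b t) (q a b t.+1) <= delta.
  have -> : delta = C * s + A by rewrite /s; field; rewrite gt_eqF.
  exact: qpath_step HP a b t (ltW C0) (ltW s0).
have Qe a b : cball d y l a -> cball d y l b -> q a b m = b.
  rewrite /cball /q /= => ha hb; apply: (@qpath_end Pq C A s HP); apply: le_trans ms.
  by apply: le_trans (d_tri a y b) _; rewrite d_sym; lra.
have QL : q x0 y L = y.
  by rewrite /q; apply: (@qpath_end Pq C A s HP); apply: steps_cover; rewrite ?d_ge0.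
have BC :=
  block_count (qpath_0 s HP) Qs Qe (ltn0Sn _) (cball_center y (ltW l0)) QL wB S_sep Rs0.
apply: (limn_esup_lb (N := (2 * (L + m))%N)) => n Hn.
have m0 : (0 < m)%N by [].
have [Ln n0 n_le] := hop_count m0 Hn.
have S1 : 1 <= #|S|%:R :> R by rewrite ler1n.
have := BC n Ln; rewrite natrX => /(elog_over_pow_ge n S1) hops_lb.
apply: le_trans _ hops_lb; rewrite lee_fin.
apply: (growth_arith (l := l) (m := m%:R) c0 s0 _ _ lnS ms3).
- by rewrite ltr0n.
- exact: ler0n.
- by move: n_le; rewrite -(ler_nat R) !natrM.
Qed.

Lemma large_scale_bound (c C A M delta : R) : 0 < c -> 0 < C ->
  A + 12 * C * `|M| / c < delta -> M <= c * ((delta - A) / C) / 12.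
Proof.
move=> c0 C0 hd.
have h : 12 * C * `|M| < (delta - A) * c by rewrite -ltr_pdivrMr //; lra.
have -> : c * ((delta - A) / C) / 12 = ((delta - A) * c) / (12 * C) by field; rewrite gt_eqF.
rewrite ler_pdivlMr ?mulr_gt0 //; apply: le_trans (ltW h).
by rewrite mulrC ler_wpM2l ?ler_norm // mulr_ge0 // ltW.
Qed.

Lemma part_ii : quasigeodesic d -> bounded_geometry d ->
  (0 < limf_esup (ball_growth d) (pinfty_nbhs R))%E ->
  forall x0 : X, coarse_entropy d x0 = +oo%E.
Proof.
move=> qg bg /growth_exceeds [c [c0 Hc]] x0.
have [Pq [C [A [HP C1 A0]]]] := quasigeodesic_paths qg.
have C0 : 0 < C := lt_le_trans ltr01 C1.
rewrite coarse_entropyE; apply: cvg_lim => //; apply/cvgeyPge => M.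
exists (A + 12 * C * `|M| / c); split; first by rewrite num_real.
move=> delta /= hd.
have dA : A < delta.
  by apply: le_lt_trans hd; rewrite lerDl divr_ge0 ?mulr_ge0 // ltW.
have d0 : 0 <= delta := le_trans A0 (ltW dA).
have lb Rs : 0 < Rs -> ((c * ((delta - A) / C) / 12)%:E <= entropy_at delta Rs x0)%E.
  exact: entropy_at_lb HP C1 A0 bg c0 Hc dA.
rewrite (cvg_lim _ (nonincreasing_cvge (entropy_at_mono x0 d0))) //.
apply: le_ereal_inf_tmp => _ [Rs _ <-].
apply: le_trans (_ : (c * ((delta - A) / C) / 12)%:E <= _)%E.
  by rewrite lee_fin large_scale_bound.
have [Rs0|Rs_le0] := ltP 0 Rs; first exact: lb.
by apply: le_trans (lb 1 ltr01) _; exact: (entropy_at_mono x0 d0 (le_trans Rs_le0 ler01)).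
Qed.

End CoarseEntropy.

Unset Implicit Arguments.

Theorem mainTheorem16 (R : realType) (X : Type) (d : X -> X -> R) :
  is_metric d -> quasigeodesic d -> bounded_geometry d ->
  ((ball_growth d l @[l --> +oo] --> 0%E) ->
     forall x0 : X, coarse_entropy d x0 = 0%E) /\
  ((0 < limf_esup (ball_growth d) (pinfty_nbhs R))%E ->
     forall x0 : X, coarse_entropy d x0 = +oo%E).
Proof.
move=> dm qg bg; split => H x0; first exact: part_i dm bg H x0.
exact: part_ii dm qg bg H x0.
Qed.
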